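(* Let $q\ge2$, $k>0$, and $p\ge q+k+1$, and let $V(x)=\frac{x^p}{p}-\frac{x^q}{q}$ for $x\ge0$, so $V'(x)=x^{p-1}-x^{q-1}$. Let $c\in(0,1)$ be the unique solution in $(0,1)$ of $x^{q+k}-x^{q-1}=k(x-1)$. Then $(x-1)V'(x)\ge k(x-1)^2$ for all $x\in[c,\infty)$. *)

(* real exponents via Rpower (x^a := exp (a * ln x), valid for x > 0). *)
From Stdlib Require Import Reals.
Open Scope R_scope.

Definition V (p q x : R) : R := Rpower x p / p - Rpower x q / q.

Definition Vprime (p q x : R) : R := Rpower x (p - 1) - Rpower x (q - 1).

Definition c_eq (q k x : R) : Prop :=
  Rpower x (q + k) - Rpower x (q - 1) = k * (x - 1).

From Stdlib Require Import Reals Lra.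
Open Scope R_scope.

(* For [x >= 1], [V'(x) = x^(q-1) (x^(p-q) - 1)] and Bernoulli's inequality gives
   [x^(p-q) - 1 >= (p-q)(x-1) >= k(x-1)].
   For [c <= x < 1], [V'(x) <= x^(q-1) (x^(k+1) - 1)], and the defining equation
   of [c] says that [x^(q-1) (1 - x^(k+1)) / (1 - x)] equals [k] at [x = c].  This
   quotient is nondecreasing on [(0,1)]: [x^(q-1)] increases, and so does the slope
   [(1 - x^(k+1)) / (1 - x)] of the chord of the convex function [x^(k+1)] ending
   at [1].  Hence [V'(x) <= k(x-1)] there. *)

Lemma Rpower_1_l (y : R) : Rpower 1 y = 1.
Proof. unfold Rpower. rewrite ln_1, Rmult_0_r. apply exp_0. Qed.

Lemma Rpower_gt0 (x y : R) : 0 < Rpower x y.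
Proof. apply exp_pos. Qed.

Lemma Rpower_le_exponent_le1 (x a b : R) :
  0 < x <= 1 -> a <= b -> Rpower x b <= Rpower x a.
Proof.
  intros hx hab.
  replace b with (a + (b - a)) by ring.
  rewrite Rpower_plus.
  assert (Rpower x (b - a) <= 1).
  { rewrite <- (Rpower_1_l (b - a)). apply Rle_Rpower_l; lra. }
  pose proof (Rpower_gt0 x a). nra.
Qed.

Lemma Rpower_tangent_le (a x y : R) : 1 <= a -> 0 < x -> 0 < y ->
  Rpower x a + a * Rpower x (a - 1) * (y - x) <= Rpower y a.
Proof.
  intros ha hx hy.
  set (D := a * Rpower x (a - 1)).
  set (h := fun u => Rpower u a - D * u).
  set (h' := fun u => a * Rpower u (a - 1) - D).
  assert (hder : forall u, 0 < u -> derivable_pt_lim h u (h' u)).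
  { intros u hu. apply derivable_pt_lim_minus.
    - now apply derivable_pt_lim_power.
    - rewrite <- (Rmult_1_r D) at 2.
      apply derivable_pt_lim_scal, derivable_pt_lim_id. }
  assert (h'_sign : forall u, 0 < u -> 0 <= h' u * (u - x)).
  { intros u hu. unfold h', D.
    destruct (Rle_or_lt x u).
    - assert (Rpower x (a - 1) <= Rpower u (a - 1)) by (apply Rle_Rpower_l; lra).
      apply Rmult_le_pos; nra.
    - assert (Rpower u (a - 1) <= Rpower x (a - 1)) by (apply Rle_Rpower_l; lra).
      replace (_ * (u - x))
        with (a * (Rpower x (a - 1) - Rpower u (a - 1)) * (x - u)) by ring.
      apply Rmult_le_pos; nra. }
  enough (h x <= h y) by (unfold h in *; lra).
  destruct (Rtotal_order x y) as [hxy | [<- | hyx]].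
  - destruct (MVT_cor2 h h' x y hxy) as [u [hu hmid]].
    { intros u hu. apply hder. lra. }
    pose proof (h'_sign u ltac:(lra)). nra.
  - lra.
  - destruct (MVT_cor2 h h' y x hyx) as [u [hu hmid]].
    { intros u hu. apply hder. lra. }
    pose proof (h'_sign u ltac:(lra)). nra.
Qed.

Lemma Rpower_Bernoulli (a x : R) : 1 <= a -> 0 < x ->
  1 + a * (x - 1) <= Rpower x a.
Proof.
  intros ha hx.
  pose proof (Rpower_tangent_le a 1 x ha ltac:(lra) hx) as T.
  rewrite !Rpower_1_l in T. lra.
Qed.

Lemma Rpower_chord_to_1_le (a c x : R) : 1 <= a -> 0 < c <= x -> x < 1 ->
  (1 - Rpower c a) * (1 - x) <= (1 - Rpower x a) * (1 - c).
Proof.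
  intros ha hc hx.
  pose proof (Rpower_tangent_le a x c ha ltac:(lra) ltac:(lra)) as Tc.
  pose proof (Rpower_tangent_le a x 1 ha ltac:(lra) ltac:(lra)) as T1.
  rewrite Rpower_1_l in T1.
  assert (0 <= a * Rpower x (a - 1)).
  { pose proof (Rpower_gt0 x (a - 1)). apply Rmult_le_pos; lra. }
  nra.
Qed.

Lemma Rpower_chord_to_1_weighted_le (b a c x : R) :
  0 <= b -> 1 <= a -> 0 < c <= x -> x < 1 ->
  Rpower c b * (1 - Rpower c a) * (1 - x)
  <= Rpower x b * (1 - Rpower x a) * (1 - c).
Proof.
  intros hb ha hc hx.
  pose proof (Rpower_chord_to_1_le a c x ha hc hx).
  assert (Rpower c b <= Rpower x b) by (apply Rle_Rpower_l; lra).
  assert (0 <= 1 - Rpower c a).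
  { rewrite <- (Rpower_1_l a). pose proof (Rle_Rpower_l c 1 a ltac:(lra) ltac:(lra)). lra. }
  pose proof (Rpower_gt0 c b).
  rewrite !Rmult_assoc. apply Rmult_le_compat; nra.
Qed.

Lemma c_eq_factor (q k c : R) :
  c_eq q k c -> Rpower c (q - 1) * (1 - Rpower c (k + 1)) = k * (1 - c).
Proof.
  unfold c_eq. intros hceq.
  replace (q + k) with ((q - 1) + (k + 1)) in hceq by ring.
  rewrite Rpower_plus in hceq. lra.
Qed.

Lemma Vprime_ge_1 (p q k x : R) :
  1 <= q -> 1 <= p - q -> k <= p - q -> 1 <= x -> k * (x - 1) <= Vprime p q x.
Proof.
  intros hq hpq hk hx. unfold Vprime.
  replace (p - 1) with ((q - 1) + (p - q)) by ring.
  rewrite Rpower_plus.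
  assert (1 <= Rpower x (q - 1)).
  { rewrite <- (Rpower_O x) at 1 by lra. apply Rle_Rpower; lra. }
  pose proof (Rpower_Bernoulli (p - q) x hpq ltac:(lra)).
  assert (k * (x - 1) <= Rpower x (p - q) - 1) by nra.
  assert (1 * (Rpower x (p - q) - 1) <= Rpower x (q - 1) * (Rpower x (p - q) - 1)).
  { apply Rmult_le_compat_r; nra. }
  lra.
Qed.

Lemma Vprime_le_lt_1 (p q k c x : R) :
  1 <= q -> 0 <= k -> q + k + 1 <= p -> 0 < c -> c_eq q k c ->
  c <= x < 1 -> Vprime p q x <= k * (x - 1).
Proof.
  intros hq hk hp hc hceq hx. unfold Vprime.
  assert (hpow : Rpower x (p - 1) <= Rpower x (q - 1) * Rpower x (k + 1)).
  { rewrite <- Rpower_plus.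
    apply Rpower_le_exponent_le1; lra. }
  pose proof (Rpower_chord_to_1_weighted_le (q - 1) (k + 1) c x
                ltac:(lra) ltac:(lra) ltac:(lra) ltac:(lra)) as hmono.
  rewrite (c_eq_factor q k c hceq) in hmono.
  assert (k * (1 - x) <= Rpower x (q - 1) * (1 - Rpower x (k + 1))).
  { apply (Rmult_le_reg_r (1 - c)); nra. }
  nra.
Qed.

Theorem lemma4 (q k p c : R)
  (hq : 2 <= q) (hk : 0 < k) (hp : q + k + 1 <= p)
  (hc : 0 < c < 1) (hceq : c_eq q k c)
  (hcuniq : forall y : R, 0 < y < 1 -> c_eq q k y -> y = c) :
  forall x : R, c <= x -> (x - 1) * Vprime p q x >= k * (x - 1) ^ 2.
Proof.
  intros x hx. apply Rle_ge.
  destruct (Rle_or_lt 1 x) as [hx1 | hx1].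
  - pose proof (Vprime_ge_1 p q k x ltac:(lra) ltac:(lra) ltac:(lra) hx1). nra.
  - pose proof (Vprime_le_lt_1 p q k c x ltac:(lra) ltac:(lra) hp
                  ltac:(lra) hceq ltac:(lra)). nra.
Qed.
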